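(* Let $N\ge1$, $M\ge1$, let $L$ be an invertible linear transformation of $\mathbb R^N$ and $u_1,\ldots,u_M\in\mathbb R^N$, and let $$\Lambda:=\bigcup_{j=1}^M L^*\left(u_j+\mathbb Z^N\right)\subset\mathbb R^N.$$ Suppose there exist $M$ points $a_1,\ldots,a_M\in\Lambda$ such that $\Lambda(a_i,a_k)\not\subset\Lambda$ for all $i\ne k$. Then $M$ is the smallest possible number in such a representation: whenever $\Lambda=\bigcup_{j=1}^{M_0}L_0^*\left(\tilde u_j+\mathbb Z^N\right)$ for some invertible linear transformation $L_0$ of $\mathbb R^N$, some integer $M_0\ge1$ and some vectors $\tilde u_1,\ldots,\tilde u_{M_0}\in\mathbb R^N$, we have $M\le M_0$.
   Context: $L^*$ denotes the adjoint of $L$. For two points $a,b\in\mathbb R^N$, $\Lambda(a,b):=\{a+k(b-a): k\in\mathbb Z\}$ is the one-dimensional lattice generated by $a$ and $b$. *)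

From mathcomp Require Import all_boot all_order all_algebra.
From mathcomp Require Import reals.
Set Implicit Arguments. Unset Strict Implicit. Unset Printing Implicit Defensive.
Import Order.TTheory GRing.Theory Num.Theory.
Local Open Scope ring_scope.

(* Vectors of R^N are column vectors 'cV[R]_N; a linear map of R^N is a
   square matrix A acting by v |-> A *m v; its adjoint L^* (w.r.t. the
   standard inner product) is the transpose A^T. *)

Definition int_vec (R : realType) (N : nat) (v : 'cV[R]_N) : Prop :=
  forall i : 'I_N, v i 0 \is a Num.int.

Definition union_lattice (R : realType) (N M : nat) (A : 'M[R]_N)
  (u : 'I_M -> 'cV[R]_N) (x : 'cV[R]_N) : Prop :=
  exists (j : 'I_M) (z : 'cV[R]_N), int_vec z /\ x = A^T *m (u j + z).

Definition lattice1 (R : realType) (N : nat) (a b : 'cV[R]_N) (x : 'cV[R]_N)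
  : Prop := exists k : int, x = a + k%:~R *: (b - a).

From mathcomp Require Import all_boot all_order all_algebra.
Import Order.TTheory GRing.Theory Num.Theory.
From mathcomp Require Import reals.
Set Implicit Arguments. Unset Strict Implicit. Unset Printing Implicit Defensive.
Local Open Scope ring_scope.

(* Each coset L^*(u + Z^N) contains the whole lattice Lambda(a, b) of any two
   of its points, since Z^N is closed under affine integer combinations.  So
   points a_i whose lattices Lambda(a_i, a_k) escape Lambda lie in pairwise
   distinct cosets of any representation of Lambda, which therefore has at
   least M cosets. *)

Section LatticeCoset.
Variables (R : realType) (N : nat).

Definition lattice_coset (A : 'M[R]_N) (v x : 'cV[R]_N) : Prop :=
  exists z : 'cV[R]_N, int_vec z /\ x = A^T *m (v + z).

Lemma union_latticeP M (A : 'M[R]_N) (u : 'I_M -> 'cV[R]_N) x :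
  union_lattice A u x <-> exists j, lattice_coset A (u j) x.
Proof. by split=> -[j hj]; exists j. Qed.

Lemma int_vec_lattice1 (z1 z2 : 'cV[R]_N) (k : int) :
  int_vec z1 -> int_vec z2 -> int_vec (z1 + k%:~R *: (z2 - z1)).
Proof.
move=> hz1 hz2 i; rewrite !mxE.
by rewrite rpredD ?rpredM ?intr_int ?rpredB.
Qed.

Lemma lattice1_sub_coset (A : 'M[R]_N) (v a b x : 'cV[R]_N) :
  lattice_coset A v a -> lattice_coset A v b -> lattice1 a b x ->
  lattice_coset A v x.
Proof.
move=> [z1 [hz1 ->]] [z2 [hz2 ->]] [k ->].
exists (z1 + k%:~R *: (z2 - z1)); split; first exact: int_vec_lattice1.
rewrite -mulmxBr scalemxAr -mulmxDr addrA; congr (_ *m (_ + _ *: _)).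
by rewrite opprD addrACA subrr add0r.
Qed.

End LatticeCoset.

Theorem lemma2p4 (R : realType) (N M : nat) (hN : (1 <= N)%N) (hM : (1 <= M)%N)
  (A : 'M[R]_N) (hA : A \in unitmx) (u : 'I_M -> 'cV[R]_N)
  (a : 'I_M -> 'cV[R]_N)
  (ha : forall i, union_lattice A u (a i))
  (hsep : forall i k : 'I_M, i != k ->
     ~ (forall x, lattice1 (a i) (a k) x -> union_lattice A u x)) :
  forall (M0 : nat) (A0 : 'M[R]_N) (u0 : 'I_M0 -> 'cV[R]_N),
    (1 <= M0)%N -> A0 \in unitmx ->
    (forall x, union_lattice A u x <-> union_lattice A0 u0 x) ->
    (M <= M0)%N.
Proof.
move=> M0 A0 u0 _ _ same_lattice.
have /fin_all_exists[f a_in_f] (i : 'I_M) :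
    exists j, lattice_coset A0 (u0 j) (a i).
  by apply/union_latticeP/same_lattice.
have f_inj : injective f.
  move=> i k fik; apply/eqP/negPn/negP => ne_ik.
  apply: (hsep i k ne_ik) => x hx; apply/same_lattice/union_latticeP.
  have a_k_in_f_i := a_in_f k; rewrite -fik in a_k_in_f_i.
  by exists (f i); exact: lattice1_sub_coset (a_in_f i) a_k_in_f_i hx.
by have := leq_card f f_inj; rewrite !card_ord.
Qed.
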